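(* Let $A_1,\ldots,A_k$ and $B_1,\ldots,B_k$ be $n\times n$ Hermitian matrices with $mI\le A_i,B_i\le MI$ for $i=1,\ldots,k$ and some scalars $0<m<M$, and let $\Phi_1,\ldots,\Phi_k:\mathscr{M}_n\to\mathscr{M}_r$ be positive linear maps with $\sum_{i=1}^k\Phi_i(I)=I$. Then $$\left(\sum_{i=1}^k\Phi_i(A_i^2)\right)^{1/2}+\left(\sum_{i=1}^k\Phi_i(B_i^2)\right)^{1/2}\le\frac{M+m}{2\sqrt{Mm}}\left(\sum_{i=1}^k\Phi_i((A_i+B_i)^2)\right)^{1/2}$$ and $$\left(\sum_{i=1}^k\Phi_i(A_i^2)\right)^{1/2}+\left(\sum_{i=1}^k\Phi_i(B_i^2)\right)^{1/2}\le\frac{(M-m)^2}{2(M+m)}I+\left(\sum_{i=1}^k\Phi_i((A_i+B_i)^2)\right)^{1/2}.$$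
   Context: $\mathscr{M}_n$ denotes the algebra of $n\times n$ complex matrices; $\le$ is the Löwner order. A linear map is positive if it maps positive semidefinite matrices to positive semidefinite matrices. *)

(* complex matrices over an arbitrary numClosedFieldType C
   (e.g. algC, or complex R for R : rcfType). *)
From HB Require Import structures.
From mathcomp Require Import all_boot all_order all_algebra.
From mathcomp Require Import sesquilinear spectral.
Set Implicit Arguments.
Unset Strict Implicit.
Unset Printing Implicit Defensive.
Import Order.TTheory GRing.Theory Num.Theory Num.Def.
Local Open Scope ring_scope.

Section Defs.
Variable C : numClosedFieldType.

Definition adjmx m p (A : 'M[C]_(m, p)) : 'M[C]_(p, m) := map_mx Num.conj (A^T).

Definition psdmx n (A : 'M[C]_n) : Prop :=
  A \is hermsymmx /\ forall v : 'rV[C]_n, 0 <= (v *m A *m adjmx v) 0 0.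

Definition lemx n (A B : 'M[C]_n) : Prop := psdmx (B - A).

Definition positive_map n r (Phi : 'M[C]_n -> 'M[C]_r) : Prop :=
  forall A : 'M[C]_n, psdmx A -> psdmx (Phi A).

(* square root via the spectral theorem (functional calculus):
   for Hermitian A = P^{-1} diag(d) P with P unitary,
   sqrt A = P^{-1} diag(sqrt d) P; for A psd this is the unique psd square root. *)
Definition msqrt n (A : 'M[C]_n) : 'M[C]_n :=
  invmx (spectralmx A) *m diag_mx (map_mx sqrtC (spectral_diag A)) *m spectralmx A.

End Defs.

From HB Require Import structures.
From mathcomp Require Import all_boot all_order all_algebra.
From mathcomp Require Import sesquilinear spectral ring.
Import Order.TTheory GRing.Theory Num.Theory.
Local Open Scope ring_scope.
Set Implicit Arguments.
Unset Strict Implicit.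
Unset Printing Implicit Defensive.

(* Write Phi(X) for \sum_i Phi_i (X_i); Phi is positive and unital.
   Since (M - A_i)(A_i - m) >= 0, Phi(A^2) + M m <= (M + m) Phi(A); completing
   squares in this Kantorovich-type bound and using that the square root is
   operator monotone gives sqrt(Phi(A^2)) <= (M + m) / (2 sqrt(M m)) Phi(A) and
   sqrt(Phi(A^2)) <= Phi(A) + (M - m)^2 / (4 (M + m)), and likewise for B.
   The Choi-Kadison inequality Phi(X)^2 <= Phi(X^2) at X = A + B gives
   Phi(A) + Phi(B) <= sqrt(Phi((A + B)^2)); adding up yields both claims. *)

Section Adjoint.
Variable C : numClosedFieldType.

Lemma adjmxK m p (A : 'M[C]_(m, p)) : adjmx (adjmx A) = A.
Proof. by apply/matrixP=> i j; rewrite !mxE conjCK. Qed.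

Lemma adjmxM m p q (A : 'M[C]_(m, p)) (B : 'M[C]_(p, q)) :
  adjmx (A *m B) = adjmx B *m adjmx A.
Proof. by rewrite /adjmx trmx_mul map_mxM. Qed.

Lemma adjmxD m p (A B : 'M[C]_(m, p)) : adjmx (A + B) = adjmx A + adjmx B.
Proof. by apply/matrixP=> i j; rewrite !mxE rmorphD. Qed.

Lemma adjmxB m p (A B : 'M[C]_(m, p)) : adjmx (A - B) = adjmx A - adjmx B.
Proof. by apply/matrixP=> i j; rewrite !mxE rmorphB. Qed.

Lemma adjmxZ m p a (A : 'M[C]_(m, p)) : adjmx (a *: A) = a^* *: adjmx A.
Proof. by apply/matrixP=> i j; rewrite !mxE rmorphM. Qed.

Lemma adjmx_scalar p a : adjmx (a%:M : 'M[C]_p) = a^*%:M.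
Proof. by apply/matrixP=> i j; rewrite !mxE rmorphMn eq_sym. Qed.

Lemma adjmx_delta p q (i : 'I_p) (j : 'I_q) :
  adjmx (delta_mx i j : 'M[C]_(p, q)) = delta_mx j i.
Proof. by apply/matrixP=> a b; rewrite !mxE conjC_nat andbC. Qed.

Lemma adjmx_sum I (s : seq I) (P : pred I) m p (F : I -> 'M[C]_(m, p)) :
  adjmx (\sum_(i <- s | P i) F i) = \sum_(i <- s | P i) adjmx (F i).
Proof.
elim/big_rec2: _ => [|i x y _ <-]; last by rewrite adjmxD.
by apply/matrixP=> i j; rewrite !mxE rmorph0.
Qed.

Lemma hermP n (A : 'M[C]_n) : reflect (adjmx A = A) (A \is hermsymmx).
Proof.
rewrite qualifE expr0 scale1r; apply: (iffP eqP) => H; first by rewrite [RHS]H.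
by rewrite -[LHS]H.
Qed.

Lemma hermsymmxD n (A B : 'M[C]_n) :
  A \is hermsymmx -> B \is hermsymmx -> A + B \is hermsymmx.
Proof. by move=> /hermP hA /hermP hB; apply/hermP; rewrite adjmxD hA hB. Qed.

Lemma affine_hermsymmx n (T : 'M[C]_n) x y :
  T \is hermsymmx -> x \is Num.real -> y \is Num.real ->
  x *: T + y%:M \is hermsymmx.
Proof.
move=> /hermP hT xR yR; apply/hermP.
by rewrite adjmxD adjmxZ adjmx_scalar hT !conj_Creal.
Qed.

End Adjoint.

Section Positive.
Variable C : numClosedFieldType.

Lemma mulmx_adj_ge0 p (u : 'rV[C]_p) : 0 <= (u *m adjmx u) 0 0.
Proof. by rewrite mxE; apply: sumr_ge0 => j _; rewrite !mxE mul_conjC_ge0. Qed.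

Lemma psdmx_herm n (A : 'M[C]_n) : psdmx A -> adjmx A = A.
Proof. by case=> /hermP. Qed.

Lemma psdmx_mul_adj p q (X : 'M[C]_(p, q)) : psdmx (X *m adjmx X).
Proof.
split; first by apply/hermP; rewrite adjmxM adjmxK.
by move=> v; rewrite !mulmxA -mulmxA -adjmxM mulmx_adj_ge0.
Qed.

Lemma psdmx_sqr n (H : 'M[C]_n) : H \is hermsymmx -> psdmx (H *m H).
Proof. by move=> /hermP {2}<-; apply: psdmx_mul_adj. Qed.

Lemma psdmx_congr p q (Z : 'M[C]_(p, q)) (F : 'M[C]_q) :
  psdmx F -> psdmx (Z *m F *m adjmx Z).
Proof.
case=> /hermP hF Fv; split.
  by apply/hermP; rewrite !adjmxM adjmxK hF mulmxA.
by move=> v; rewrite !mulmxA -mulmxA -adjmxM; apply: Fv.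
Qed.

Lemma psdmx0 n : psdmx (0 : 'M[C]_n).
Proof. by have := psdmx_mul_adj (0 : 'M[C]_n); rewrite mul0mx. Qed.

Lemma psdmxD n (A B : 'M[C]_n) : psdmx A -> psdmx B -> psdmx (A + B).
Proof.
case=> /hermP hA Av [/hermP hB Bv]; split.
  by apply/hermP; rewrite adjmxD hA hB.
by move=> v; rewrite mulmxDr mulmxDl mxE addr_ge0.
Qed.

Lemma psdmx_sum I (s : seq I) (P : pred I) n (F : I -> 'M[C]_n) :
  (forall i, P i -> psdmx (F i)) -> psdmx (\sum_(i <- s | P i) F i).
Proof.
move=> psdF; elim/big_rec: _ => [|i x Pi]; first exact: psdmx0.
exact: psdmxD (psdF i Pi).
Qed.

Lemma psdmxZ n a (A : 'M[C]_n) : 0 <= a -> psdmx A -> psdmx (a *: A).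
Proof.
move=> a0 [/hermP hA Av]; split.
  by apply/hermP; rewrite adjmxZ hA conj_Creal ?ger0_real.
by move=> v; rewrite -scalemxAr -scalemxAl mxE mulr_ge0.
Qed.

Lemma psdmx_scalar n a : 0 <= a -> psdmx (a%:M : 'M[C]_n).
Proof.
move=> a0; rewrite -scalemx1; apply: psdmxZ => //.
by have := psdmx_mul_adj (1%:M : 'M[C]_n); rewrite adjmx_scalar conjC1 mulmx1.
Qed.

Lemma lemx_refl n (A : 'M[C]_n) : lemx A A.
Proof. by rewrite /lemx subrr; apply: psdmx0. Qed.

Lemma lemx_trans n (A B D : 'M[C]_n) : lemx A B -> lemx B D -> lemx A D.
Proof.
by rewrite /lemx => hAB hBD; rewrite -(subrKA B) addrC; apply: psdmxD.
Qed.

Lemma lemxD n (A B A' B' : 'M[C]_n) :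
  lemx A B -> lemx A' B' -> lemx (A + A') (B + B').
Proof. by rewrite /lemx opprD addrACA; apply: psdmxD. Qed.

Lemma lemxZ n a (A B : 'M[C]_n) : 0 <= a -> lemx A B -> lemx (a *: A) (a *: B).
Proof. by rewrite /lemx -scalerBr; apply: psdmxZ. Qed.

Lemma psdmx_lemx_scalar n a (A : 'M[C]_n) : 0 <= a -> lemx a%:M A -> psdmx A.
Proof.
by move=> a0 aA; rewrite -(subrK a%:M A); apply: psdmxD (psdmx_scalar _ a0).
Qed.

End Positive.

Section UnitaryDiagonalization.
Variables (C : numClosedFieldType) (n : nat).

Lemma diag_conjB m (U : 'M[C]_(n, m)) (a b : 'rV[C]_n) :
  adjmx U *m diag_mx a *m U - adjmx U *m diag_mx b *m U =
  adjmx U *m diag_mx (a - b) *m U.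
Proof.
rewrite -mulmxBl -mulmxBr; congr (_ *m _ *m _).
by apply/matrixP=> i k; rewrite !mxE mulrnBl.
Qed.

Lemma diag_conj_sum_delta m (U : 'M[C]_(n, m)) (e : 'rV[C]_n) :
  adjmx U *m diag_mx e *m U = \sum_j e 0 j *: (adjmx U *m delta_mx j j *m U).
Proof.
rewrite diag_mx_sum_delta mulmx_sumr mulmx_suml; apply: eq_bigr => j _.
by rewrite -scalemxAr -scalemxAl.
Qed.

Lemma psdmx_diag_conj m (U : 'M[C]_(n, m)) (e : 'rV[C]_n) :
  (forall j, 0 <= e 0 j) -> psdmx (adjmx U *m diag_mx e *m U).
Proof.
move=> e_ge0; set S := diag_mx (map_mx sqrtC e).
have -> : diag_mx e = S *m adjmx S.
  rewrite /S /adjmx tr_diag_mx map_diag_mx mulmx_diag; congr diag_mx.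
  apply/rowP => j; rewrite !mxE.
  rewrite -[_ * _]/(sqrtC (e 0 j) * (sqrtC (e 0 j))^*).
  by rewrite conj_Creal ?ger0_real ?sqrtC_ge0 // -expr2 sqrtCK.
by have := psdmx_mul_adj (adjmx U *m S); rewrite adjmxM adjmxK !mulmxA.
Qed.

Lemma psdmx_diag_conj_delta m (U : 'M[C]_(n, m)) j :
  psdmx (adjmx U *m delta_mx j j *m U).
Proof.
have := psdmx_mul_adj (adjmx U *m (delta_mx j 0 : 'cV[C]_n)).
rewrite adjmxM adjmxK adjmx_delta !mulmxA -(mulmxA _ (delta_mx j 0)).
by rewrite mul_delta_mx.
Qed.

Variable U : 'M[C]_n.
Hypothesis U_unitary : U *m adjmx U = 1%:M.

Lemma diag_conj_mul (a b : 'rV[C]_n) :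
  (adjmx U *m diag_mx a *m U) *m (adjmx U *m diag_mx b *m U) =
  adjmx U *m diag_mx (\row_j (a 0 j * b 0 j)) *m U.
Proof.
rewrite !mulmxA -(mulmxA _ U) U_unitary mulmx1 -(mulmxA _ (diag_mx a)).
by rewrite mulmx_diag.
Qed.

Lemma scalar_diag_conj c : c%:M = adjmx U *m diag_mx (const_mx c) *m U.
Proof.
by rewrite diag_const_mx mul_mx_scalar -scalemxAl (mulmx1C U_unitary) scalemx1.
Qed.

Lemma form_diag_conj (e : 'rV[C]_n) j (w := (delta_mx 0 j : 'rV[C]_n) *m U) :
  (w *m (adjmx U *m diag_mx e *m U) *m adjmx w) 0 0 = e 0 j.
Proof.
rewrite /w adjmxM adjmx_delta !mulmxA -(mulmxA _ U) U_unitary mulmx1.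
rewrite -(mulmxA _ U) U_unitary mulmx1 -rowE row_diag_mx -scalemxAl mul_delta_mx.
by rewrite !mxE !eqxx mulr1.
Qed.

Lemma psdmx_diag_conj_ge0 (e : 'rV[C]_n) j :
  psdmx (adjmx U *m diag_mx e *m U) -> 0 <= e 0 j.
Proof.
by case=> _ /(_ ((delta_mx 0 j : 'rV[C]_n) *m U)); rewrite form_diag_conj.
Qed.

End UnitaryDiagonalization.

Section Spectral.
Variables (C : numClosedFieldType) (n : nat) (H : 'M[C]_n).
Local Notation P := (spectralmx H).
Local Notation d := (spectral_diag H).

Lemma spectral_unitary : P *m adjmx P = 1%:M.
Proof. exact/unitarymxP/spectral_unitarymx. Qed.

Lemma invmx_spectral : invmx P = adjmx P.
Proof. by rewrite invmx_unitary ?spectral_unitarymx. Qed.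

Hypothesis H_herm : H \is hermsymmx.

Lemma spectral_decomp : H = adjmx P *m diag_mx d *m P.
Proof.
have /orthomx_spectralP {1}-> := hermitian_normalmx H_herm.
by rewrite invmx_spectral.
Qed.

Lemma spectral_diag_real j : d 0 j \is Num.real.
Proof. by have /mxOverP := hermitian_spectral_diag_real H_herm. Qed.

Lemma spectral_form j (w := (delta_mx 0 j : 'rV[C]_n) *m P) :
  (w *m H *m adjmx w) 0 0 = d 0 j.
Proof.
by have := form_diag_conj spectral_unitary d j; rewrite -spectral_decomp.
Qed.

Lemma spectral_eigenvector j (w := (delta_mx 0 j : 'rV[C]_n) *m P) :
  w *m H = d 0 j *: w /\ H *m adjmx w = d 0 j *: adjmx w.
Proof.
have wH : w *m H = d 0 j *: w.
  rewrite {1}spectral_decomp /w !mulmxA -(mulmxA _ _ (adjmx _)) spectral_unitary.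
  by rewrite mulmx1 -rowE row_diag_mx scalemxAl.
split=> //; have := congr1 (@adjmx C _ _) wH.
by rewrite adjmxM adjmxZ conj_Creal ?spectral_diag_real // (hermP _ H_herm).
Qed.

End Spectral.

Section SpectralBounds.
Variable C : numClosedFieldType.

Lemma psdmx_spectral_diag_ge0 n (H : 'M[C]_n) j :
  psdmx H -> 0 <= spectral_diag H 0 j.
Proof.
case=> H_herm /(_ ((delta_mx 0 j : 'rV[C]_n) *m spectralmx H)).
by rewrite spectral_form.
Qed.

Lemma psdmx_mul_bounds n (H : 'M[C]_n) (m M : C) : H \is hermsymmx ->
  lemx m%:M H -> lemx H M%:M -> psdmx ((M%:M - H) *m (H - m%:M)).
Proof.
move=> H_herm mH HM; set P := spectralmx H; set d := spectral_diag H.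
have uP : P *m adjmx P = 1%:M := spectral_unitary H.
have HE : H = adjmx P *m diag_mx d *m P := spectral_decomp H_herm.
have Hm : H - m%:M = adjmx P *m diag_mx (d - const_mx m) *m P.
  by rewrite {1}HE (scalar_diag_conj uP m) diag_conjB.
have MH : M%:M - H = adjmx P *m diag_mx (const_mx M - d) *m P.
  by rewrite {1}HE (scalar_diag_conj uP M) diag_conjB.
rewrite MH Hm diag_conj_mul //; apply: psdmx_diag_conj => j; rewrite !mxE.
by apply: mulr_ge0; [move: HM | move: mH];
  rewrite /lemx ?MH ?Hm => /(psdmx_diag_conj_ge0 uP j); rewrite !mxE.
Qed.

End SpectralBounds.

Section SquareRoot.
Variable C : numClosedFieldType.

Lemma psdmx_msqrt n (H : 'M[C]_n) : psdmx H -> psdmx (msqrt H).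
Proof.
move=> psdH; rewrite /msqrt invmx_spectral; apply: psdmx_diag_conj => j.
by rewrite mxE sqrtC_ge0 psdmx_spectral_diag_ge0.
Qed.

Lemma mulmx_msqrt n (H : 'M[C]_n) : psdmx H -> msqrt H *m msqrt H = H.
Proof.
move=> psdH; have H_herm : H \is hermsymmx by case: psdH.
rewrite /msqrt invmx_spectral diag_conj_mul ?spectral_unitary //.
rewrite [RHS](spectral_decomp H_herm); congr (_ *m diag_mx _ *m _).
by apply/rowP=> j; rewrite !mxE -expr2 sqrtCK.
Qed.

(* Since Y^2 - X^2 = Y (Y - X) + (Y - X) X, at a unit eigenvector of Y - X
   with eigenvalue d the quadratic form of Y^2 - X^2 equals d times that of
   Y + X; both forms are nonnegative, hence so is d. *)
Lemma lemx_sqr n (X Y : 'M[C]_n) :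
  psdmx X -> psdmx Y -> lemx (X *m X) (Y *m Y) -> lemx X Y.
Proof.
move=> psdX psdY psdD.
have D_herm : Y - X \is hermsymmx by apply/hermP; rewrite adjmxB !psdmx_herm.
rewrite /lemx (spectral_decomp D_herm); apply: psdmx_diag_conj => j.
have := spectral_form D_herm j; have := spectral_eigenvector D_herm j.
set w := _ *m spectralmx _; set d := spectral_diag _ 0 j.
move=> [wD Dw] /= dE.
set a := (w *m Y *m adjmx w) 0 0; set b := (w *m X *m adjmx w) 0 0.
have a_ge0 : 0 <= a by case: psdY => _; apply.
have b_ge0 : 0 <= b by case: psdX => _; apply.
have entryB (U V : 'M[C]_1) : (U - V) 0 0 = U 0 0 - V 0 0 by rewrite !mxE.
have entryD (U V : 'M[C]_1) : (U + V) 0 0 = U 0 0 + V 0 0 by rewrite !mxE.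
have entryZ c (U : 'M[C]_1) : (c *: U) 0 0 = c * U 0 0 by rewrite !mxE.
have d_ab : d = a - b by rewrite -dE mulmxBr mulmxBl entryB.
have sqr_form : (w *m (Y *m Y - X *m X) *m adjmx w) 0 0 = d * (a + b).
  have -> : Y *m Y - X *m X = Y *m (Y - X) + (Y - X) *m X.
    by rewrite mulmxBr mulmxBl addrA subrK.
  rewrite mulmxDr mulmxDl entryD mulrDr; congr (_ + _).
    by rewrite -!mulmxA Dw -!scalemxAr entryZ !mulmxA.
  by rewrite !mulmxA wD -!scalemxAl entryZ.
have : 0 <= d * (a + b) by rewrite -sqr_form; case: psdD => _; apply.
have [ab0|ab_neq0] := eqVneq (a + b) 0.
  move/eqP: ab0; rewrite paddr_eq0 // => /andP[/eqP a0 /eqP b0].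
  by rewrite d_ab a0 b0 subrr.
by rewrite pmulr_lge0 // lt_def ab_neq0 addr_ge0.
Qed.

End SquareRoot.

Section KantorovichSquareRoot.
Variables (C : numClosedFieldType) (r : nat) (T S : 'M[C]_r) (m M : C).
Hypotheses (m_gt0 : 0 < m) (m_lt_M : m < M) (T_psd : psdmx T) (S_psd : psdmx S).
Hypothesis kantorovich : lemx (S *m S + (M * m)%:M) ((M + m) *: T).

Let M_gt0 : 0 < M. Proof. exact: lt_trans m_lt_M. Qed.
Let T_herm : T \is hermsymmx. Proof. by case: T_psd. Qed.

Let mulmx_affine (x y : C) :
  (x *: T + y%:M) *m (x *: T + y%:M) =
  (x * x) *: (T *m T) + (2 * x * y) *: T + (y * y)%:M.
Proof.
rewrite mulmxDl !mulmxDr mul_mx_scalar mul_scalar_mx -scalemxAl -scalemxAr.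
rewrite scalerA -scalar_mxM.
by move: (T *m T) => TT; apply/matrixP => i j; rewrite !mxE; case: eqP => _; ring.
Qed.

(* (c T)^2 - S^2 = (c T - sqrt (M m))^2 + ((M + m) T - M m - S^2). *)
Lemma kantorovich_ratio : lemx S (((M + m) / (2 * sqrtC (M * m))) *: T).
Proof.
set s := sqrtC (M * m); set c := (M + m) / (2 * s).
have s_gt0 : 0 < s by rewrite sqrtC_gt0 mulr_gt0.
have c_ge0 : 0 <= c by rewrite divr_ge0 ?ltW ?addr_gt0 ?mulr_gt0.
apply: lemx_sqr => //; first exact: psdmxZ.
have sqr_psd : psdmx ((c *: T + (- s)%:M) *m (c *: T + (- s)%:M)).
  apply/psdmx_sqr/affine_hermsymmx; first exact: T_herm.
    exact: ger0_real.
  by rewrite realN ger0_real ?ltW.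
move: (psdmxD sqr_psd kantorovich); rewrite /lemx; congr psdmx.
rewrite mulmx_affine -scalemxAl -scalemxAr scalerA -[M * m](sqrtCK (M * m)) -/s.
move: (T *m T) (S *m S) => TT SS; apply/matrixP => i j; rewrite !mxE.
have s_neq0 : s != 0 by rewrite gt_eqF.
by rewrite /c; case: eqP => _; rewrite ?mulr1n ?mulr0n; field.
Qed.

(* (T + e)^2 - S^2 = (T - a)^2 + ((M + m) T - M m - S^2)
   with a = (M + m) / 2 - e and e = (M - m)^2 / (4 (M + m)). *)
Lemma kantorovich_shift : lemx S (T + ((M - m) ^+ 2 / (2 * (M + m)) / 2)%:M).
Proof.
set e := (M - m) ^+ 2 / (2 * (M + m)) / 2; set a := (M + m) / 2 - e.
have Mm_gt0 : 0 < M + m by rewrite addr_gt0.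
have e_ge0 : 0 <= e.
  by rewrite !divr_ge0 ?exprn_ge0 ?subr_ge0 ?ltW ?mulr_gt0 ?ltr0n.
have a_real : a \is Num.real by rewrite rpredB ?ger0_real // divr_ge0 ?ltW ?ltr0n.
apply: lemx_sqr => //; first exact: psdmxD (psdmx_scalar _ e_ge0).
have sqr_psd : psdmx ((1 *: T + (- a)%:M) *m (1 *: T + (- a)%:M)).
  apply/psdmx_sqr/affine_hermsymmx; first exact: T_herm.
    exact: rpred1.
  by rewrite realN.
move: (psdmxD sqr_psd kantorovich); rewrite /lemx; congr psdmx.
rewrite -[in T + e%:M](scale1r T) !mulmx_affine.
move: (T *m T) (S *m S) => TT SS; apply/matrixP => i j; rewrite !mxE.
have two_neq0 : (2 : C) != 0 by rewrite pnatr_eq0.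
have Mm_neq0 : M + m != 0 by rewrite gt_eqF.
by rewrite /a /e; case: eqP => _;
  rewrite ?mulr1n ?mulr0n; field; rewrite ?mulf_neq0.
Qed.

End KantorovichSquareRoot.

Section PositiveMaps.
Variables (C : numClosedFieldType) (n r k : nat).
Variable Phi : 'I_k -> {linear 'M[C]_n -> 'M[C]_r}.
Hypothesis Phi_pos : forall i, positive_map (Phi i).
Hypothesis Phi_unital : \sum_(i < k) Phi i 1%:M = 1%:M.

Lemma psdmx_sum_map (X : 'I_k -> 'M[C]_n) :
  (forall i, psdmx (X i)) -> psdmx (\sum_(i < k) Phi i (X i)).
Proof. by move=> psdX; apply: psdmx_sum => i _; apply: Phi_pos. Qed.

Section Choi.
Variable X : 'I_k -> 'M[C]_n.
Hypothesis X_herm : forall i, X i \is hermsymmx.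

Let P i := spectralmx (X i).
Let d (p : 'I_k * 'I_n) := spectral_diag (X p.1) 0 p.2.
Let F (p : 'I_k * 'I_n) := Phi p.1 (adjmx (P p.1) *m delta_mx p.2 p.2 *m P p.1).

Let sum_map_spectral (f : C -> C) :
  \sum_(i < k)
    Phi i (adjmx (P i) *m diag_mx (map_mx f (spectral_diag (X i))) *m P i)
  = \sum_p f (d p) *: F p.
Proof.
rewrite -(pair_bigA _ (fun i j => f (d (i, j)) *: F (i, j))).
apply: eq_bigr => i _.
rewrite diag_conj_sum_delta linear_sum; apply: eq_bigr => j _.
by rewrite linearZ mxE.
Qed.

Let sum_map_spectral_id : \sum_(i < k) Phi i (X i) = \sum_p d p *: F p.
Proof.
rewrite -(sum_map_spectral id); apply: eq_bigr => i _.
by rewrite map_mx_id // -spectral_decomp.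
Qed.

Let sum_map_spectral_sqr :
  \sum_(i < k) Phi i (X i *m X i) = \sum_p (d p * d p) *: F p.
Proof.
rewrite -(sum_map_spectral (fun x => x * x)); apply: eq_bigr => i _.
rewrite {1 2}(spectral_decomp (X_herm i)) diag_conj_mul ?spectral_unitary //.
by congr (Phi i (_ *m diag_mx _ *m _)); apply/rowP => j; rewrite !mxE.
Qed.

Let sum_map_spectral_1 : 1%:M = \sum_p F p.
Proof.
under eq_bigr do rewrite -[F _]scale1r.
rewrite -(sum_map_spectral (fun=> 1)) -Phi_unital; apply: eq_bigr => i _.
congr (Phi i _); rewrite (scalar_diag_conj (spectral_unitary (X i)) 1).
by congr (_ *m diag_mx _ *m _); apply/rowP => j; rewrite !mxE.
Qed.

Let d_real p : (d p)^* = d p.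
Proof. by rewrite conj_Creal ?spectral_diag_real. Qed.

Let F_psd p : psdmx (F p).
Proof. exact/Phi_pos/psdmx_diag_conj_delta. Qed.

(* With X i = \sum_j d_(i,j) E_(i,j) spectrally and F_(i,j) = Phi i E_(i,j),
   the inequality is the expansion of
   \sum_(i,j) (d_(i,j) - Y) F_(i,j) (d_(i,j) - Y)^* >= 0. *)
Lemma sum_map_sqr_le (Y := \sum_(i < k) Phi i (X i)) :
  lemx (Y *m Y) (\sum_(i < k) Phi i (X i *m X i)).
Proof.
have Y_herm : adjmx Y = Y.
  rewrite /Y sum_map_spectral_id adjmx_sum; apply: eq_bigr => p _.
  by rewrite adjmxZ d_real psdmx_herm.
rewrite /lemx.
suff -> : \sum_(i < k) Phi i (X i *m X i) - Y *m Y =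
          \sum_p ((d p)%:M - Y) *m F p *m adjmx ((d p)%:M - Y).
  by apply: psdmx_sum => p _; apply/psdmx_congr/F_psd.
rewrite (eq_bigr (fun p => (d p * d p) *: F p - d p *: (Y *m F p)
                           - (d p *: (F p *m Y) - Y *m F p *m Y))); last first.
  move=> p _; rewrite adjmxB adjmx_scalar d_real Y_herm mulmxBl mul_scalar_mx.
  by rewrite !mulmxBr mul_mx_scalar scalerBr scalerA mulmxBl -scalemxAl.
have YF : \sum_p d p *: (Y *m F p) = Y *m Y.
  rewrite [RHS in _ = Y *m RHS]sum_map_spectral_id mulmx_sumr.
  by under eq_bigr do rewrite scalemxAr.
have FY : \sum_p d p *: (F p *m Y) = Y *m Y.
  rewrite [RHS in _ = RHS *m Y]sum_map_spectral_id mulmx_suml.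
  by under eq_bigr do rewrite scalemxAl.
have YFY : \sum_p Y *m F p *m Y = Y *m Y.
  by rewrite -mulmx_suml -mulmx_sumr -sum_map_spectral_1 mulmx1.
by rewrite !sumrB -sum_map_spectral_sqr YF FY YFY subrr subr0.
Qed.

End Choi.

Lemma sum_map_kantorovich (X : 'I_k -> 'M[C]_n) (m M : C) :
  (forall i, X i \is hermsymmx) ->
  (forall i, lemx m%:M (X i) /\ lemx (X i) M%:M) ->
  lemx (\sum_(i < k) Phi i (X i *m X i) + (M * m)%:M)
       ((M + m) *: \sum_(i < k) Phi i (X i)).
Proof.
move=> X_herm X_bounds.
have : psdmx (\sum_(i < k) Phi i ((M%:M - X i) *m (X i - m%:M))).
  apply: psdmx_sum_map => i; have [mX XM] := X_bounds i.
  exact: psdmx_mul_bounds.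
have expand Y :
    (M%:M - Y) *m (Y - m%:M) = (M + m) *: Y - ((M * m) *: 1%:M + Y *m Y).
  rewrite mulmxBl !mulmxBr !mul_mx_scalar !mul_scalar_mx.
  move: (Y *m Y) => YY; apply/matrixP => a b; rewrite !mxE.
  by case: eqP => _; ring.
under eq_bigr do rewrite expand linearB linearD !linearZ /=.
rewrite sumrB big_split /= -!scaler_sumr Phi_unital scalemx1.
by rewrite /lemx (addrC (_%:M)).
Qed.

Lemma sum_map_le_msqrt (X : 'I_k -> 'M[C]_n) :
  (forall i, X i \is hermsymmx) -> psdmx (\sum_(i < k) Phi i (X i)) ->
  lemx (\sum_(i < k) Phi i (X i)) (msqrt (\sum_(i < k) Phi i (X i *m X i))).
Proof.
move=> X_herm T_psd.
have Q_psd : psdmx (\sum_(i < k) Phi i (X i *m X i)).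
  by apply: psdmx_sum_map => i; apply: psdmx_sqr.
apply: lemx_sqr (psdmx_msqrt Q_psd) _ => //.
by rewrite mulmx_msqrt //; apply: sum_map_sqr_le.
Qed.

Lemma msqrt_sum_map_le (X : 'I_k -> 'M[C]_n) (m M : C) :
  0 < m -> m < M -> (forall i, X i \is hermsymmx) ->
  (forall i, lemx m%:M (X i) /\ lemx (X i) M%:M) ->
  let T := \sum_(i < k) Phi i (X i) in
  let S := msqrt (\sum_(i < k) Phi i (X i *m X i)) in
  lemx S (((M + m) / (2 * sqrtC (M * m))) *: T) /\
  lemx S (T + ((M - m) ^+ 2 / (2 * (M + m)) / 2)%:M).
Proof.
move=> m_gt0 m_lt_M X_herm X_bounds T S.
have T_psd : psdmx T.
  apply: psdmx_sum_map => i.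
  exact: psdmx_lemx_scalar (ltW m_gt0) (X_bounds i).1.
have Q_psd : psdmx (\sum_(i < k) Phi i (X i *m X i)).
  by apply: psdmx_sum_map => i; apply: psdmx_sqr.
have := sum_map_kantorovich X_herm X_bounds; rewrite -(mulmx_msqrt Q_psd) -/S -/T.
have S_psd : psdmx S by apply: psdmx_msqrt.
by split; [apply: kantorovich_ratio | apply: kantorovich_shift].
Qed.

End PositiveMaps.

Theorem mainTheorem8 (C : numClosedFieldType) (n r k : nat)
  (A B : 'I_k -> 'M[C]_n) (m M : C)
  (Phi : 'I_k -> {linear 'M[C]_n -> 'M[C]_r}) :
  0 < m -> m < M ->
  (forall i, A i \is hermsymmx) -> (forall i, B i \is hermsymmx) ->
  (forall i, lemx (m%:M) (A i) /\ lemx (A i) (M%:M)) ->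
  (forall i, lemx (m%:M) (B i) /\ lemx (B i) (M%:M)) ->
  (forall i, positive_map (Phi i)) ->
  \sum_(i < k) Phi i 1%:M = 1%:M ->
  let SA := msqrt (\sum_(i < k) Phi i (A i *m A i)) in
  let SB := msqrt (\sum_(i < k) Phi i (B i *m B i)) in
  let SAB := msqrt (\sum_(i < k) Phi i ((A i + B i) *m (A i + B i))) in
  lemx (SA + SB) (((M + m) / (2 * sqrtC (M * m))) *: SAB) /\
  lemx (SA + SB) (((M - m) ^+ 2 / (2 * (M + m))) *: 1%:M + SAB).
Proof.
move=> m_gt0 m_lt_M A_herm B_herm A_bounds B_bounds Phi_pos Phi_unital SA SB SAB.
have [SA_ratio SA_shift] :=
  msqrt_sum_map_le Phi_pos Phi_unital m_gt0 m_lt_M A_herm A_bounds.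
have [SB_ratio SB_shift] :=
  msqrt_sum_map_le Phi_pos Phi_unital m_gt0 m_lt_M B_herm B_bounds.
have A_psd i : psdmx (A i) := psdmx_lemx_scalar (ltW m_gt0) (A_bounds i).1.
have B_psd i : psdmx (B i) := psdmx_lemx_scalar (ltW m_gt0) (B_bounds i).1.
have T_le : lemx (\sum_(i < k) Phi i (A i) + \sum_(i < k) Phi i (B i)) SAB.
  rewrite -big_split /=; under eq_bigr do rewrite -linearD.
  apply: sum_map_le_msqrt => // [i|]; first exact: hermsymmxD.
  by apply: psdmx_sum_map => // i; apply: psdmxD.
split.
  apply: lemx_trans (lemxD SA_ratio SB_ratio) _; rewrite -scalerDr.
  have M_gt0 := lt_trans m_gt0 m_lt_M.
  apply: lemxZ T_le.
  by rewrite divr_ge0 ?ltW ?addr_gt0 ?mulr_gt0 ?sqrtC_gt0 ?mulr_gt0.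
apply: lemx_trans (lemxD SA_shift SB_shift) _.
set e := (M - m) ^+ 2 / (2 * (M + m)).
have halves : (e / 2)%:M + (e / 2)%:M = e *: 1%:M :> 'M[C]_r.
  by rewrite scalemx1 -raddfD /= -splitr.
rewrite addrACA halves addrC.
exact: lemxD (lemx_refl _) T_le.
Qed.
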